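(* Let $n_0,L\in\mathbb{N}_+$, $n_1,\dots,n_L\in\mathbb{N}_+$, $h_l\in\mathrm{RL}(n_{l-1},n_l)$ for $l=1,\dots,L$, $\mathbf{h}=(h_1,\dots,h_L)$, and $\gamma\in\Gamma$. Then $\tilde{\mathcal{H}}^{(1)}(\mathcal{S}^{(1)}_{\mathbf{h}})\preceq\varphi^{(\gamma)}_{n_1}({\rm e}_{n_0})$.
   Context: $\sigma(x)=\max(0,x)$; $\mathrm{RL}(n,n')$ ($n,n'\in\mathbb{N}_+$) is the set of maps $h:\mathbb{R}^n\to\mathbb{R}^{n'}$, $h(x)_i=\sigma(\langle x,w_i\rangle+b_i)$ for some $W\in\mathbb{R}^{n'\times n}$ with rows $w_i$, $b\in\mathbb{R}^{n'}$; convention: $\mathrm{RL}(0,n')$ are constant maps $\{0\}\to\mathbb{R}^{n'}$ with $\mathcal{H}_{n'}(\mathcal{S}_h)={\rm e}_0$. Signature $S_h(x)_i=1$ iff $\langle x,w_i\rangle+b_i>0$ else $0$; $\mathcal{S}_h=\{S_h(x)\}$; $|s|=\sum_i s_i$. Multi signature $S_{\mathbf{h}}(x)=(S_{h_1}(x),S_{h_2}(h_1(x)),\dots,S_{h_L}(h_{L-1}\circ\cdots\circ h_1(x)))$, $\mathcal{S}_{\mathbf{h}}=\{S_{\mathbf{h}}(x):x\in\mathbb{R}^{n_0}\}$, and for $l\le L$, $\mathcal{S}^{(l)}_{\mathbf{h}}=\{(s_1,\dots,s_l):(s_1,\dots,s_L)\in\mathcal{S}_{\mathbf{h}}\}$.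 $V$: sequences $(v_j)_{j\in\mathbb{N}}$ of nonnegative integers with finite sum; ${\rm e}_i$ has $({\rm e}_i)_j=\delta_{ij}$; $v\preceq w$ iff $\sum_{j\ge J}v_j\le\sum_{j\ge J}w_j$ for all $J\in\mathbb{N}$; for finite families $\max_i(v^{(i)})_J=\max_i\sum_{j\ge J}v^{(i)}_j-\max_i\sum_{j\ge J+1}v^{(i)}_j$. Activation histogram $\mathcal{H}_{n'}(\mathcal{S})=(|\{s\in\mathcal{S}:|s|=j\}|)_j$. Dimension histogram: for $U\subseteq\{0,1\}^{n_1}\times\dots\times\{0,1\}^{n_l}$, $\tilde{\mathcal{H}}^{(l)}(U)=(|\{(s_1,\dots,s_l)\in U:\min(n_0,|s_1|,\dots,|s_l|)=j\}|)_{j\in\mathbb{N}}$. $\Gamma$: families $(\gamma_{n,n'})_{n'\in\mathbb{N}_+,n\in\{0,\dots,n'\}}$ in $V$ with (i) $\max\{\mathcal{H}_{n'}(\mathcal{S}_h):h\in\mathrm{RL}(n,n')\}\preceq\gamma_{n,n'}$, (ii) $n\le\tilde n\le n'\Rightarrow\gamma_{n,n'}\preceq\gamma_{\tilde n,n'}$. $\mathrm{cl}_{i^*}(v)_i=v_i$ for $i<i^*$, $\sum_{j\ge i^*}v_j$ for $i=i^*$, $0$ for $i>i^*$. $\varphi^{(\gamma)}_{n'}(v)=\sum_{n=0}^\infty v_n\,\mathrm{cl}_{\min(n,n')}(\gamma_{\min(n,n'),n'})$. *)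

From HB Require Import structures.
From mathcomp Require Import all_boot all_order all_algebra.
From mathcomp Require Import boolp reals.
Set Implicit Arguments. Unset Strict Implicit. Unset Printing Implicit Defensive.
Import Order.TTheory GRing.Theory Num.Theory.

(* v_j := nth 0 v j ; entries beyond size v are 0.                            *)
Definition vtail (v : seq nat) (J : nat) : nat := \sum_(J <= j < size v) nth 0 v j.

Definition vle (v w : seq nat) : Prop := forall J : nat, vtail v J <= vtail w J.

Definition ev (i : nat) : seq nat := rcons (nseq i 0) 1.

Definition vadd (v w : seq nat) : seq nat :=
  mkseq (fun j => nth 0 v j + nth 0 w j) (maxn (size v) (size w)).
Definition vscale (c : nat) (v : seq nat) : seq nat := map (fun a => c * a) v.

Definition cl (istar : nat) (v : seq nat) : seq nat :=
  mkseq (fun i => if i < istar then nth 0 v i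
                  else if i == istar then vtail v istar else 0) istar.+1.

Definition phi (gamma : nat -> nat -> seq nat) (n' : nat) (v : seq nat) : seq nat :=
  \big[vadd/[::]]_(k < size v)
     vscale (nth 0 v k) (cl (minn k n') (gamma (minn k n') n')).

Fixpoint bits (k : nat) : seq (seq bool) :=
  if k is k'.+1 then [seq b :: s | b <- [:: false; true], s <- bits k'] else [:: [::]].

Definition ones (s : seq bool) : nat := count id s.

Definition act_hist (n' : nat) (S : seq bool -> Prop) : seq nat :=
  mkseq (fun j => count (fun s => `[< S s >] && (ones s == j)) (bits n')) n'.+1.

Definition allseqs (ds : seq nat) : seq (seq (seq bool)) :=
  foldr (fun d acc => [seq s :: u | s <- bits d, u <- acc]) [:: [::]] ds.

(* Dimension histogram  ~H^{(l)}(U), U ⊆ {0,1}^{n_1} x ... x {0,1}^{n_l},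
   ds = [:: n_1; ...; n_l]; entry j counts u in U with
   min(n0, |s_1|, ..., |s_l|) = j (all such j are <= n0). *)
Definition dim_hist (n0 : nat) (ds : seq nat) (U : seq (seq bool) -> Prop) : seq nat :=
  mkseq (fun j => count (fun u => `[< U u >] && (foldr minn n0 (map ones u) == j))
                        (allseqs ds)) n0.+1.

Section Layers.
Variable R : realType.
Local Open Scope ring_scope.

Record layer (n m : nat) := Layer { lW : 'M[R]_(m, n) ; lb : 'cV[R]_m }.

Definition preact n m (h : layer n m) (x : 'cV[R]_n) : 'cV[R]_m := lW h *m x + lb h.

Definition relu (t : R) : R := Num.max 0 t.

Definition apply_layer n m (h : layer n m) (x : 'cV[R]_n) : 'cV[R]_m :=
  map_mx relu (preact h x).

Definition sig n m (h : layer n m) (x : 'cV[R]_n) : seq bool :=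
  [seq (0 < preact h x i 0) | i <- enum 'I_m].

Definition sigset n m (h : layer n m) : seq bool -> Prop :=
  fun s => exists x : 'cV[R]_n, sig h x = s.

Inductive net : nat -> Type :=
| net_nil : forall n, net n
| net_cons : forall n m, layer n m -> net m -> net n.

Fixpoint net_pos n (N : net n) : bool :=
  match N with
  | net_nil _ => true
  | net_cons _ m _ N' => (0 < m)%N && net_pos N'
  end.

Fixpoint msig n (N : net n) : 'cV[R]_n -> seq (seq bool) :=
  match N in net n return 'cV[R]_n -> seq (seq bool) with
  | net_nil _ => fun _ => [::]
  | net_cons _ _ h N' => fun x => sig h x :: msig N' (apply_layer h x)
  end.

Definition msigset n (N : net n) : seq (seq bool) -> Prop :=
  fun u => exists x : 'cV[R]_n, msig N x = u.

Definition msigset_l (l : nat) n (N : net n) : seq (seq bool) -> Prop :=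
  fun u => exists u', msigset N u' /\ take l u' = u.

(* Gamma: families (gamma_{n,n'})_{n' >= 1, 0 <= n <= n'} with
   (i)  max{H_{n'}(S_h) : h in RL(n,n')} ⪯ gamma_{n,n'}
        (for n = 0 by convention this max is e_0)
   (ii) n <= ñ <= n' -> gamma_{n,n'} ⪯ gamma_{ñ,n'} *)
Definition isGamma (gamma : nat -> nat -> seq nat) : Prop :=
  forall n' n : nat, (0 < n')%N -> (n <= n')%N ->
    (if n == 0%N then vle (ev 0) (gamma 0%N n')
     else forall h : layer n n', vle (act_hist n' (sigset h)) (gamma n n'))
    /\ (forall nt : nat, (n <= nt <= n')%N -> vle (gamma n n') (gamma nt n')).

End Layers.
Arguments net_nil {R n}.
Arguments net_cons {R n m}.

From HB Require Import structures.
From mathcomp Require Import all_boot all_order all_algebra.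
From mathcomp Require Import boolp reals.
From mathcomp Require Import zify.
Import GRing.Theory Num.Theory.

(* The tail of phi_{n1}(e_{n0}) at J is the tail of
   gamma_{m,n1} at J if J <= m := min(n0, n1), and 0 beyond.  The tail of the
   dimension histogram of the first layer at J counts the signatures s of h1
   with min(|s|, n0) >= J: there are none if J > m, and otherwise they are the
   signatures with |s| >= J, counted by the tail of the activation histogram of
   h1.  If n0 <= n1 property (i) of gamma bounds that tail by gamma_{n0,n1};
   if n0 > n1 it is at most the tail of the activation histogram of the
   identity layer on R^{n1}, which realises every signature, and (i) bounds
   that one by gamma_{n1,n1}. *)

Lemma vle_trans u v w : vle u v -> vle v w -> vle u w.
Proof. by move=> huv hvw J; apply: leq_trans (huv J) (hvw J). Qed.

Lemma vtail_widen v J K : size v <= K -> vtail v J = \sum_(J <= j < K) nth 0 v j.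
Proof.
move=> hK; rewrite /vtail; case: (leqP J (size v)) => hJ.
  rewrite (big_cat_nat hJ hK) /= [X in _ = _ + X]big_nat_cond [X in _ = _ + X]big1 ?addn0 //.
  by move=> j /andP[/andP[hj _] _]; exact: nth_default.
rewrite big_geq ?(ltnW hJ) // big_nat_cond big1 // => j /andP[/andP[hj _] _].
apply: nth_default; lia.
Qed.

Lemma vtail_nil J : vtail [::] J = 0.
Proof. by rewrite /vtail big_geq. Qed.

Lemma vtail_vadd v w J : vtail (vadd v w) J = vtail v J + vtail w J.
Proof.
rewrite (vtail_widen _ _ _ (leq_maxl (size v) (size w))).
rewrite (vtail_widen _ _ _ (leq_maxr (size v) (size w))).
rewrite (vtail_widen (vadd v w) J (maxn (size v) (size w))) ?size_mkseq //.
by rewrite -big_split; apply: eq_big_nat => j /andP[_ hj]; rewrite nth_mkseq.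
Qed.

Lemma vtail_vscale c v J : vtail (vscale c v) J = c * vtail v J.
Proof.
rewrite /vtail size_map big_distrr; apply: eq_big_nat => j /andP[_ hj].
by rewrite (nth_map 0).
Qed.

Lemma vtail_cl m v J : vtail (cl m v) J = if J <= m then vtail v J else 0.
Proof.
rewrite /cl (vtail_widen _ _ _ (leqnn _)) size_mkseq.
under eq_big_nat => j /andP[_ hj] do rewrite nth_mkseq //.
case: leqP => hJ; last by rewrite big_geq.
rewrite big_nat_recr //= ltnn eqxx.
have hsize : size v <= maxn (size v) m by apply: leq_maxl.
have hm : m <= maxn (size v) m by apply: leq_maxr.
rewrite (vtail_widen _ J _ hsize) (vtail_widen _ m _ hsize) (big_cat_nat hJ hm) /=.
by congr (_ + _); apply: eq_big_nat => j /andP[_ ->].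
Qed.

Lemma vtail_phi_ev gamma n' n J :
  vtail (phi gamma n' (ev n)) J = vtail (cl (minn n n') (gamma (minn n n') n')) J.
Proof.
rewrite /phi (big_morph (vtail^~ J) (fun v w => vtail_vadd v w J) (vtail_nil J)).
rewrite /ev size_rcons size_nseq big_ord_recr big1 ?add0n.
  by rewrite vtail_vscale nth_rcons size_nseq ltnn eqxx mul1n.
by move=> i _; rewrite vtail_vscale nth_rcons size_nseq (ltn_ord i) nth_nseq (ltn_ord i).
Qed.

Lemma sum_nat_eq n J K : \sum_(J <= j < K) (n == j : nat) = (J <= n < K).
Proof.
rewrite (eq_bigr (fun j => if j == n then 1 else 0)); last by move=> j _; rewrite eq_sym; case: eqP.
by rewrite -big_mkcond sum1_count /= count_uniq_mem ?iota_uniq // mem_index_iota.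
Qed.

Lemma sum_count_eq (T : Type) (a : pred T) (g : T -> nat) t J K :
  \sum_(J <= j < K) count (fun x => a x && (g x == j)) t
  = count (fun x => a x && (J <= g x < K)) t.
Proof.
elim: t => [|x t IH] /=; first by rewrite big1.
rewrite big_split /= IH; congr (_ + _).
by case: (a x); rewrite /= ?sum_nat_eq ?big1.
Qed.

Lemma vtail_mkseq_count (T : Type) (a : pred T) (g : T -> nat) t n J :
  vtail (mkseq (fun j => count (fun x => a x && (g x == j)) t) n) J
  = count (fun x => a x && (J <= g x < n)) t.
Proof.
rewrite (vtail_widen _ _ n) ?size_mkseq // -sum_count_eq.
by apply: eq_big_nat => j /andP[_ hj]; rewrite nth_mkseq.
Qed.

Lemma size_bits k s : s \in bits k -> size s = k.
Proof.
elim: k s => [|k IH] s; first by rewrite inE => /eqP ->.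
by case/allpairsP=> -[b s'] /= [_ /IH <- ->].
Qed.

Lemma ones_bits k s : s \in bits k -> ones s <= k.
Proof. by move=> /size_bits <-; apply: count_size. Qed.

Lemma vtail_act_hist n S J :
  vtail (act_hist n S) J = count (fun s => `[< S s >] && (J <= ones s < n.+1)) (bits n).
Proof. exact: vtail_mkseq_count. Qed.

Lemma vtail_dim_hist1 n0 n1 U J :
  vtail (dim_hist n0 [:: n1] U) J
  = count (fun s => `[< U [:: s] >] && (J <= minn (ones s) n0 < n0.+1)) (bits n1).
Proof.
rewrite /dim_hist vtail_mkseq_count /allseqs /=.
by elim: (bits n1) => //= s l ->.
Qed.

Section IdentityLayer.
Variable R : realType.
Local Open Scope ring_scope.

Definition id_layer n : layer R n n := Layer 1%:M 0.

Lemma sigset_id_layer n s : size s = n -> sigset (id_layer n) s.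
Proof.
move=> hs; exists (\col_i (if nth false s i then 1 else 0)).
rewrite /sig /preact /= mul1mx addr0.
transitivity [seq nth false s i | i <- map val (enum 'I_n)]; last first.
  by rewrite val_enum_ord -hs; exact: mkseq_nth.
rewrite -map_comp; apply: eq_map => i /=; rewrite mxE.
by case: (nth false s i); rewrite ?ltr01 ?ltxx.
Qed.

End IdentityLayer.

Lemma act_hist_le_id_layer (R : realType) n (S : seq bool -> Prop) :
  vle (act_hist n S) (act_hist n (sigset (id_layer R n))).
Proof.
move=> J; rewrite !vtail_act_hist.
rewrite [X in _ <= X](eq_in_count (a2 := fun s => J <= ones s < n.+1)).
  by apply: sub_count => s /andP[].
by move=> s /size_bits /sigset_id_layer /asboolT ->.
Qed.

Lemma act_hist_le_gamma (R : realType) gamma n0 n1 (h : layer R n0 n1) :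
  isGamma R gamma -> 0 < n0 -> 0 < n1 ->
  vle (act_hist n1 (sigset h)) (gamma (minn n0 n1) n1).
Proof.
move=> hgamma hn0 hn1; case: (leqP n0 n1) => hn.
  have [+ _] := hgamma n1 n0 hn1 hn.
  by rewrite (negbTE (lt0n_neq0 hn0)).
have [+ _] := hgamma n1 n1 hn1 (leqnn _).
rewrite (negbTE (lt0n_neq0 hn1)) => /(_ (id_layer R n1)).
exact/vle_trans/act_hist_le_id_layer.
Qed.

Lemma msigset_l1_cons (R : realType) n0 n1 (h1 : layer R n0 n1) (N' : net R n1) s :
  msigset_l 1 (net_cons h1 N') [:: s] <-> sigset h1 s.
Proof.
split; first by case=> _ [[x <-]] /= [<-]; exists x.
case=> x hx; exists (msig (net_cons h1 N') x); split; first by exists x.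
by rewrite /= take0 hx.
Qed.

Lemma vtail_dim_hist_first_layer (R : realType) n0 n1 (h1 : layer R n0 n1)
    (N' : net R n1) J :
  vtail (dim_hist n0 [:: n1] (msigset_l 1 (net_cons h1 N'))) J
  = if J <= minn n0 n1 then vtail (act_hist n1 (sigset h1)) J else 0.
Proof.
rewrite vtail_dim_hist1 vtail_act_hist.
under eq_count => s do rewrite (asbool_equiv_eq (msigset_l1_cons _ _ _ h1 N' s)).
case: leqP => hJ.
  apply: eq_in_count => s /ones_bits hs /=.
  by congr (_ && _); apply/idP/idP => /andP[? ?]; apply/andP; split; lia.
rewrite -(count_pred0 (bits n1)); apply: eq_in_count => s /ones_bits hs /=.
by apply/negbTE/negP => /andP[_ /andP[? ?]]; lia.
Qed.

Theorem mainTheorem3 (R : realType) (n0 n1 : nat) (h1 : layer R n0 n1) (N' : net R n1)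
    (gamma : nat -> nat -> seq nat) :
  (0 < n0)%N -> (0 < n1)%N -> net_pos N' -> isGamma R gamma ->
  vle (dim_hist n0 [:: n1] (msigset_l 1 (net_cons h1 N'))) (phi gamma n1 (ev n0)).
Proof.
move=> hn0 hn1 _ hgamma J.
rewrite vtail_phi_ev vtail_cl vtail_dim_hist_first_layer.
by case: ifP => // _; apply: act_hist_le_gamma.
Qed.
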